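(* Let $x_1,\dots,x_N\in S^2\times H$ be the points of a point cloud, represented by $f(x)=\frac{1}{N}\sum_{i=1}^N\delta(x-x_i)$, and let $\psi: S^2\times H\to\mathbb{R}$ satisfy $\psi(Z(\theta)x)=\psi(x)$ for all $x\in S^2\times H$ and all angles $\theta$. Define the sparse correlation at the point $x_j$ by $$[\psi\ast f](x_j)=\int_{S^2\times H}\psi(\mathcal{T}(x_j)^{-1}x)f(x)\,dx=\frac{1}{N}\sum_{i=1}^N\psi(\mathcal{T}(x_j)^{-1}x_i).$$ Then for every $Q\in SO(3)$ and every $j$, $[\psi\ast L_Qf](Qx_j)=[\psi\ast f](x_j)$, where $L_Qf(x)=f(Q^{-1}x)$ is the rotated point cloud $\frac1N\sum_i\delta(x-Qx_i)$; explicitly, $$\frac{1}{N}\sum_{i=1}^N\psi(\mathcal{T}(Qx_j)^{-1}Qx_i)=\frac{1}{N}\sum_{i=1}^N\psi(\mathcal{T}(x_j)^{-1}x_i).$$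
   Context: $Z(\theta)$, $Y(\theta)$ are the rotation matrices about the $z$- and $y$-axes by angle $\theta$; $n=(0,0,1)^T$; points of $S^2$ are $s(\alpha,\beta)=Z(\alpha)Y(\beta)n$ with $\alpha\in[0,2\pi]$, $\beta\in[0,\pi]$; $H=[0,1]$; a point of $S^2\times H$ is $(s,h)$ (direction and radial distance of a point of the unit ball). A rotation $Q\in SO(3)$ acts on $S^2\times H$ by $Q(s,h)=(Qs,h)$. The map $\mathcal{T}: S^2\times H\to SO(3)$ is $\mathcal{T}(s(\alpha,\beta),h)=Z(\alpha)Y(\beta)Z(2\pi h)$. $\delta$ is the Dirac delta. *)

From HB Require Import structures.
From mathcomp Require Import all_boot all_order all_algebra.
From mathcomp Require Import all_classical all_reals all_analysis.
Set Implicit Arguments. Unset Strict Implicit. Unset Printing Implicit Defensive.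
Import Order.TTheory GRing.Theory Num.Theory.
Local Open Scope ring_scope.

Definition Zrot (R : realType) (t : R) : 'M[R]_3 :=
  \matrix_(i < 3, j < 3)
    nth 0 (nth [::] [:: [:: cos t; - sin t; 0];
                       [:: sin t;   cos t; 0];
                       [:: 0;       0;     1]] i) j.

Definition Yrot (R : realType) (t : R) : 'M[R]_3 :=
  \matrix_(i < 3, j < 3)
    nth 0 (nth [::] [:: [:: cos t;   0; sin t];
                       [:: 0;       1; 0];
                       [:: - sin t; 0; cos t]] i) j.

Definition npole (R : realType) : 'cV[R]_3 := \col_(i < 3) (i == 2%N :> nat)%:R.

Definition pt (R : realType) := ('cV[R]_3 * R)%type.

Definition on_S2 (R : realType) (s : 'cV[R]_3) : Prop := (s^T *m s) = 1%:M.
Definition in_S2H (R : realType) (x : pt R) : Prop := on_S2 x.1 /\ 0 <= x.2 <= 1.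

Definition is_SO3 (R : realType) (Q : 'M[R]_3) : Prop :=
  Q^T *m Q = 1%:M /\ \det Q = 1.

Definition act (R : realType) (Q : 'M[R]_3) (x : pt R) : pt R := (Q *m x.1, x.2).

Definition sph_coords (R : realType) (sph : 'cV[R]_3 -> R * R) : Prop :=
  forall s, on_S2 s ->
    [/\ 0 <= (sph s).1 <= 2 * pi, 0 <= (sph s).2 <= pi &
        s = Zrot (sph s).1 *m Yrot (sph s).2 *m npole R].

Definition Tmap (R : realType) (sph : 'cV[R]_3 -> R * R) (x : pt R) : 'M[R]_3 :=
  Zrot (sph x.1).1 *m Yrot (sph x.1).2 *m Zrot (2 * pi * x.2).

Definition sparse_corr (R : realType) (sph : 'cV[R]_3 -> R * R) (N : nat)
  (psi : pt R -> R) (xs : 'I_N -> pt R) (y : pt R) : R :=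
  N%:R^-1 * \sum_(i < N) psi (act (invmx (Tmap sph y)) (xs i)).

From HB Require Import structures.
From mathcomp Require Import all_boot all_order all_algebra.
From mathcomp Require Import all_classical all_reals all_analysis.
From mathcomp Require Import ring lra.
Import Order.TTheory GRing.Theory Num.Theory.
Local Open Scope ring_scope.
Set Implicit Arguments. Unset Strict Implicit.

(* Write T(x) = A(s) Z(2 pi h) with the frame A(s) = Z(alpha) Y(beta), so that
   A(s) n = s.  For a rotation Q the frame change A(Qs)^T Q A(s) lies in SO(3)
   and fixes the north pole, hence is a z-rotation Z(theta); theta need not
   vanish, since the spherical coordinates are an arbitrary choice.  As
   z-rotations commute, T(Qx_j)^-1 Q = Z(theta) T(x_j)^-1, and the
   Z-invariance of psi absorbs Z(theta) in every term of the sum. *)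

Lemma forall_ord3 (P : 'I_3 -> Prop) : P 0 -> P 1 -> P 2 -> forall i, P i.
Proof.
move=> P0 P1 P2 [[|[|[|//]]] lti].
- by rewrite (_ : Ordinal lti = 0) //; apply/val_inj.
- by rewrite (_ : Ordinal lti = 1) //; apply/val_inj.
- by rewrite (_ : Ordinal lti = 2) //; apply/val_inj.
Qed.

Section Matrix3.
Variable R : comNzRingType.

Lemma mulmx3E m n (A : 'M[R]_(m, 3)) (B : 'M[R]_(3, n)) i j :
  (A *m B) i j = A i 0 * B 0 j + A i 1 * B 1 j + A i 2 * B 2 j.
Proof.
rewrite mxE !big_ord_recl big_ord0 /=.
pose a (k : nat) : R := A i (inord k); pose b (k : nat) : R := B (inord k) j.
have Ea k : A i k = a k by rewrite /a inord_val.
have Eb k : B k j = b k by rewrite /b inord_val.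
by rewrite !Ea !Eb /=; clearbody a b; ring.
Qed.

Lemma det_mx33 (A : 'M[R]_3) : \det A =
  A 0 0 * (A 1 1 * A 2 2 - A 1 2 * A 2 1)
  - A 0 1 * (A 1 0 * A 2 2 - A 1 2 * A 2 0)
  + A 0 2 * (A 1 0 * A 2 1 - A 1 1 * A 2 0).
Proof.
rewrite (expand_det_row _ 0) !big_ord_recl big_ord0 /cofactor.
rewrite !(expand_det_row _ 0) !big_ord_recl !big_ord0 /cofactor !det_mx11 !mxE.
pose a (i j : nat) : R := A (inord i) (inord j).
have Ea i j : A i j = a i j by rewrite /a !inord_val.
rewrite !Ea /= -[(-1) ^+ 2]/((-1) * (-1)); clearbody a; ring.
Qed.

End Matrix3.

Section Orthogonal.
Variables (R : comUnitRingType) (n : nat).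

Definition orthogonalmx (M : 'M[R]_n) : Prop := M^T *m M = 1%:M.

Lemma orthogonalmx_trmx (M : 'M[R]_n) :
  orthogonalmx M -> orthogonalmx M^T.
Proof. by rewrite /orthogonalmx trmxK => /mulmx1C. Qed.

Lemma orthogonalmx_mulmxT (M : 'M[R]_n) : orthogonalmx M -> M *m M^T = 1%:M.
Proof. exact: mulmx1C. Qed.

Lemma mul_orthogonalmx (A B : 'M[R]_n) :
  orthogonalmx A -> orthogonalmx B -> orthogonalmx (A *m B).
Proof.
by rewrite /orthogonalmx trmx_mul => oA oB; rewrite mulmxA -(mulmxA B^T) oA mulmx1.
Qed.

Lemma invmx_orthogonal (M : 'M[R]_n) : orthogonalmx M -> invmx M = M^T.
Proof.
move=> oM; have [_ uM] := mulmx1_unit oM.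
by rewrite -[M^T]mulmx1 -(mulmxV uM) mulmxA oM mul1mx.
Qed.

End Orthogonal.

Section Rotations.
Variable R : realType.
Implicit Types (a b t : R) (M : 'M[R]_3).

Lemma Zrot_orthogonal t : orthogonalmx (Zrot t).
Proof.
apply/matrixP; do 2 apply: forall_ord3; rewrite mulmx3E !mxE /=;
  have := cos2Dsin2 t; nra.
Qed.

Lemma Yrot_orthogonal t : orthogonalmx (Yrot t).
Proof.
apply/matrixP; do 2 apply: forall_ord3; rewrite mulmx3E !mxE /=;
  have := cos2Dsin2 t; nra.
Qed.

Lemma det_Zrot t : \det (Zrot t) = 1.
Proof. rewrite det_mx33 !mxE /=; have := cos2Dsin2 t; nra. Qed.

Lemma det_Yrot t : \det (Yrot t) = 1.
Proof. rewrite det_mx33 !mxE /=; have := cos2Dsin2 t; nra. Qed.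

Lemma ZrotD a b : Zrot a *m Zrot b = Zrot (a + b).
Proof.
apply/matrixP; do 2 apply: forall_ord3; rewrite mulmx3E !mxE /= ?cosD ?sinD;
  ring.
Qed.

Lemma trmx_Zrot t : (Zrot t)^T = Zrot (- t).
Proof.
by apply/matrixP; do 2 apply: forall_ord3; rewrite !mxE /= ?cosN ?sinN ?opprK.
Qed.

Lemma on_S2_orthogonal M (s : 'cV[R]_3) :
  orthogonalmx M -> on_S2 s -> on_S2 (M *m s).
Proof.
by rewrite /on_S2 trmx_mul => oM hs; rewrite mulmxA -(mulmxA s^T) oM mulmx1.
Qed.

Lemma in_S2H_act M (x : pt R) : orthogonalmx M -> in_S2H x -> in_S2H (act M x).
Proof. by move=> oM [hs hh]; split=> //; apply: on_S2_orthogonal. Qed.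

Lemma act_mul M M' (x : pt R) : act M (act M' x) = act (M *m M') x.
Proof. by rewrite /act /= mulmxA. Qed.

Lemma circle_angle (c s : R) :
  c ^+ 2 + s ^+ 2 = 1 -> exists t, cos t = c /\ sin t = s.
Proof.
move=> hcs; have c_itv : -1 <= c <= 1 by apply/andP; split; nra.
have cos_acos : cos (acos c) = c by rewrite acosK // in_itv.
have sin_acos : sin (acos c) = `|s|
  by rewrite sin_acos // -hcs addrC addKr sqrtr_sqr.
have [s_ge0 | s_lt0] := lerP 0 s.
  by exists (acos c); rewrite cos_acos sin_acos ger0_norm.
by exists (- acos c); rewrite cosN sinN cos_acos sin_acos ltr0_norm ?opprK.
Qed.

Lemma npole_stabilizer M :
  orthogonalmx M -> \det M = 1 -> M *m npole R = npole R -> exists t, M = Zrot t.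
Proof.
move=> oM detM fixM.
have col2 i : (M *m npole R) i 0 = npole R i 0 by rewrite fixM.
move: (col2 0) (col2 1) (col2 2); rewrite !mulmx3E !mxE /= !mulr0 !mulr1 !add0r.
move=> m02 m12 m22.
have entry i j : (M^T *m M) i j = (1%:M : 'M[R]_3) i j by rewrite oM.
have entry' i j : (M *m M^T) i j = (1%:M : 'M[R]_3) i j
  by rewrite orthogonalmx_mulmxT.
move: (entry 0 0) (entry 1 1) (entry 0 1) (entry' 2 2); rewrite !mulmx3E !mxE /=.
move=> col0 col1 col01 row2.
rewrite det_mx33 in detM.
have m20 : M 2 0 = 0 by nra.
have m21 : M 2 1 = 0 by nra.
have [t [cost sint]] : exists t, cos t = M 0 0 /\ sin t = M 1 0
  by apply: circle_angle; nra.
rewrite m02 m12 m22 m20 m21 in detM col1 col01.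
have : (M 0 1 + M 1 0) ^+ 2 + (M 1 1 - M 0 0) ^+ 2 = 0 by nra.
move/eqP; rewrite paddr_eq0 ?sqr_ge0 // !sqrf_eq0 subr_eq0 addr_eq0.
move=> /andP[/eqP m01 /eqP m11].
by exists t; apply/matrixP; do 2 apply: forall_ord3; rewrite !mxE /= ?cost ?sint.
Qed.

End Rotations.

Section Frames.
Variables (R : realType) (sph : 'cV[R]_3 -> R * R).
Hypothesis sphP : sph_coords sph.

Definition sph_frame (s : 'cV[R]_3) : 'M[R]_3 :=
  Zrot (sph s).1 *m Yrot (sph s).2.

Lemma Tmap_frame (x : pt R) : Tmap sph x = sph_frame x.1 *m Zrot (2 * pi * x.2).
Proof. by []. Qed.

Lemma sph_frame_orthogonal s : orthogonalmx (sph_frame s).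
Proof. exact: mul_orthogonalmx (Zrot_orthogonal _) (Yrot_orthogonal _). Qed.

Lemma Tmap_orthogonal (x : pt R) : orthogonalmx (Tmap sph x).
Proof. exact: mul_orthogonalmx (sph_frame_orthogonal _) (Zrot_orthogonal _). Qed.

Lemma det_sph_frame s : \det (sph_frame s) = 1.
Proof. by rewrite det_mulmx det_Zrot det_Yrot mulr1. Qed.

Lemma sph_frame_npole s : on_S2 s -> sph_frame s *m npole R = s.
Proof. by move=> /sphP[]. Qed.

Lemma sph_frame_change (Q : 'M[R]_3) s : is_SO3 Q -> on_S2 s ->
  exists t, (sph_frame (Q *m s))^T *m Q *m sph_frame s = Zrot t.
Proof.
move=> [oQ detQ] hs.
apply: npole_stabilizer.
- apply: mul_orthogonalmx (sph_frame_orthogonal _).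
  exact: mul_orthogonalmx (orthogonalmx_trmx (sph_frame_orthogonal _)) oQ.
- by rewrite !det_mulmx det_tr det_sph_frame det_Zrot det_Yrot detQ !mulr1.
- rewrite -mulmxA (sph_frame_npole hs) -mulmxA.
  have hQs := sph_frame_npole (on_S2_orthogonal oQ hs).
  by rewrite -{2}hQs mulmxA sph_frame_orthogonal mul1mx.
Qed.

Lemma Tmap_act (Q : 'M[R]_3) (y : pt R) : is_SO3 Q -> on_S2 y.1 ->
  exists t, (Tmap sph (act Q y))^T *m Q = Zrot t *m (Tmap sph y)^T.
Proof.
move=> SO3Q hy; have [t frame_t] := sph_frame_change SO3Q hy.
exists t; set A := sph_frame y.1; set A' := sph_frame (Q *m y.1).
set W := Zrot (2 * pi * y.2).
have AtQ : A'^T *m Q = Zrot t *m A^T.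
  rewrite -frame_t -mulmxA orthogonalmx_mulmxT ?mulmx1 //.
  exact: sph_frame_orthogonal.
have WtZ : W^T *m Zrot t = Zrot t *m W^T by rewrite trmx_Zrot !ZrotD addrC.
rewrite !Tmap_frame -/A -/A' -/W (trmx_mul A) (trmx_mul A').
by rewrite -mulmxA AtQ mulmxA WtZ mulmxA.
Qed.

End Frames.

Theorem theorem4 (R : realType) (sph : 'cV[R]_3 -> R * R)
  (Hsph : sph_coords sph) (N : nat) (xs : 'I_N -> pt R)
  (Hxs : forall i, in_S2H (xs i)) (psi : pt R -> R)
  (Hpsi : forall (x : pt R) (theta : R), in_S2H x ->
            psi (act (Zrot theta) x) = psi x)
  (Q : 'M[R]_3) (HQ : is_SO3 Q) (j : 'I_N) :
  sparse_corr sph psi (fun i => act Q (xs i)) (act Q (xs j)) =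
  sparse_corr sph psi xs (xs j).
Proof.
have [t Tj] := Tmap_act Hsph HQ (Hxs j).1.
rewrite /sparse_corr; congr (_ * _); apply: eq_bigr => i _ /=.
rewrite !invmx_orthogonal; try exact: Tmap_orthogonal.
rewrite (act_mul _ Q) Tj -act_mul Hpsi //.
exact/in_S2H_act/Hxs/orthogonalmx_trmx/Tmap_orthogonal.
Qed.
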